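(* Let $A$ be any subset of ${}^\omega\omega$, equipped with the restriction of the usual ultrametric of ${}^\omega\omega$, and let $Y$ be a separable metrizable space. If $f:A\to Y$ is of Baire class $1$, then there is a sequence of full functions $f_k:A\to Y$ converging pointwise to $f$.
   Context: Work in ZF plus countable choice over the reals. ${}^\omega\omega$ is the Baire space with ultrametric $d'(x,y)=2^{-n}$, $n$ least with $x(n)\ne y(n)$. $f:A\to Y$ is of Baire class $1$ if $f^{-1}(U)\in\mathbf{\Sigma}^0_2(A)$ for every open $U\subseteq Y$. A set $B\subseteq A$ is full with constant $r>0$ if $\{y\in A: d'(x,y)<r\}\subseteq B$ for all $x\in B$; a function $g:A\to Y$ is full if it takes only finitely many values and the preimage of each value is full (with some constant). *)

From HB Require Import structures.
From mathcomp Require Import all_boot all_order all_algebra.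
From mathcomp Require Import all_classical all_reals all_analysis.
Unset Implicit Arguments. Unset Printing Implicit Defensive.
Import Order.TTheory GRing.Theory Num.Theory.
Local Open Scope classical_set_scope.
Local Open Scope ring_scope.

Definition baire := nat -> nat.

Definition baire_dist (R : realType) (x y : baire) : R :=
  match pselect (exists n, x n != y n) with
  | left h => (2^-1) ^+ (ex_minn h)
  | right _ => 0
  end.

Definition rel_closed (R : realType) (A C : set baire) : Prop :=
  forall x, A x ->
    (forall r : R, 0 < r -> exists y, C y /\ A y /\ baire_dist R x y < r) -> C x.

Definition Sigma02_in (R : realType) (A B : set baire) : Prop :=
  exists F : nat -> set baire,
    (forall n, F n `<=` A /\ rel_closed R A (F n)) /\ B = \bigcup_n F n.

(* f : A -> Y is of Baire class 1 (f is given on all of baire; only A matters). *)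
Definition baire_class1 (R : realType) (Y : topologicalType) (A : set baire)
    (f : baire -> Y) : Prop :=
  forall U : set Y, open U -> Sigma02_in R A (A `&` f @^-1` U).

Definition full_set_with (R : realType) (A B : set baire) (r : R) : Prop :=
  0 < r /\ forall x, B x -> forall y, A y -> baire_dist R x y < r -> B y.

Definition full_fun (R : realType) (Y : Type) (A : set baire) (g : baire -> Y) : Prop :=
  finite_set (g @` A) /\
  forall v, (g @` A) v ->
    exists r : R, full_set_with R A (A `&` g @^-1` [set v]) r.

(* Separable metrizable space: a Hausdorff pseudometric space (= metric space)
   with a countable dense subset. *)
Definition separable (Y : topologicalType) : Prop :=
  exists D : set Y, countable D /\ dense D.

(* Fix centres e_i of a countable dense subset of Y. For every precision M the
   sets A ∩ f^-1(ball e_i 2^-M) are Σ^0_2 in A, which yields relatively closed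
   sets G M j covering A on which f is 2^-M-close to a centre c_j.  At stage k,
   let J_k(M) be the least j <= k such that G M j meets the cylinder of x of
   length k+1; as the G M j are relatively closed, J_k(M) is eventually the
   least j with x in G M j.  Put f_k(x) = c_(J_k(M)) for the largest M <= k at
   which the centres c_(J_k(a)), a <= M, are 2·2^-a-close to c_(J_k(M)).  Then
   f_k(x) depends only on the first k+1 digits of x and takes at most k+2
   values, so f_k is full; and once J_k is correct up to M_0 this choice keeps
   f_k(x) within 3·2^-M_0 of f(x). *)

From HB Require Import structures.
From mathcomp Require Import all_boot all_order all_algebra.
From mathcomp Require Import all_classical all_reals all_analysis.
From mathcomp Require Import lra zify.
Import Order.TTheory GRing.Theory Num.Theory.
Local Open Scope classical_set_scope.
Local Open Scope ring_scope.
Section HalfPowers.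
Variable R : realType.

Lemma halfX_lt m n : ((2^-1 : R) ^+ m < 2^-1 ^+ n) = (n < m)%N.
Proof. by rewrite ltr_iXn2l ?invr_gt0 ?invf_lt1 ?ltr1n. Qed.

Lemma exists_halfX_lt (r : R) : 0 < r -> exists n, (2^-1 : R) ^+ n < r.
Proof.
move=> r0; have q1 : `|(2^-1 : R)| < 1 by rewrite gtr0_norm ?invf_lt1 ?ltr1n.
have [N _ HN] := (cvgr0Pnorm_lt _).1 (cvg_expr q1) r r0.
by exists N; have := HN N (leqnn N); rewrite /= ger0_norm // exprn_ge0.
Qed.

Lemma baire_dist_ltP (x y : baire) k :
  baire_dist R x y < 2^-1 ^+ k <-> forall n, (n <= k)%N -> x n = y n.
Proof.
rewrite /baire_dist; case: pselect => [h|nh]; last first.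
  split=> [_ n _|_]; last by rewrite exprn_gt0 ?invr_gt0.
  by apply/eqP; apply: contra_notT nh => xn; exists n.
case: ex_minnP => m xm minm; rewrite halfX_lt; split=> [km n nk|agree].
  by apply/eqP; apply: contraTT km => /minm; rewrite -leqNgt => /leq_trans; apply.
by rewrite ltnNge; apply/negP => mk; move: xm; rewrite agree ?eqxx.
Qed.

End HalfPowers.

Arguments exists_halfX_lt {R r}.

Definition meets_cyl (k : nat) (x : baire) (S : set baire) : Prop :=
  exists2 y, S y & forall n, (n <= k)%N -> x n = y n.

Lemma meets_cyl_agree k x y :
  (forall n, (n <= k)%N -> x n = y n) -> meets_cyl k x = meets_cyl k y.
Proof.
move=> xy; apply/funext => S; apply/propext.
by split=> -[z Sz hz]; exists z => // n nk; rewrite -hz // xy.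
Qed.

Arguments meets_cyl_agree {k x y}.

Lemma meets_cylS k k' x S : (k' <= k)%N -> meets_cyl k x S -> meets_cyl k' x S.
Proof. by move=> k'k [y Sy hy]; exists y => // n nk'; apply/hy/(leq_trans nk'). Qed.

Lemma meets_cyl_mem k x (S : set baire) : S x -> meets_cyl k x S.
Proof. by exists x. Qed.

Lemma near_not_meets_cyl (R : realType) (A S : set baire) x :
  S `<=` A -> rel_closed R A S -> A x -> ~ S x ->
  \forall k \near \oo, ~ meets_cyl k x S.
Proof.
move=> SA clS Ax nSx.
have [[K nK]|/forallNP meets] := pselect (exists K, ~ meets_cyl K x S).
  by exists K => // k Kk; apply: contra_not nK; apply: meets_cylS.
exfalso; apply/nSx/clS => // r r0.
have [K Kr] := exists_halfX_lt r0.
have [y Sy xy] := contrapT (meets K).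
by exists y; split; [|split; [exact: SA|exact/(lt_trans _ Kr)/baire_dist_ltP]].
Qed.

Lemma find_iota_min (p : pred nat) n j : p j -> (j < n)%N ->
  (find p (iota 0 n) <= j)%N /\ p (find p (iota 0 n)).
Proof.
move=> pj jn; have hasp : has p (iota 0 n) by apply/hasP; exists j; rewrite ?mem_iota.
have ltn_find : (find p (iota 0 n) < n)%N by rewrite -[n in (_ < n)%N](size_iota 0) -has_find.
split; last by have := nth_find 0 hasp; rewrite nth_iota.
rewrite leqNgt; apply/negP => /[dup] lt /(before_find 0).
by rewrite nth_iota ?pj // (ltn_trans lt).
Qed.

Definition last_index (p : pred nat) k : nat :=
  (k - find (fun d => p (k - d)%N) (iota 0 k.+1))%N.

Lemma last_index_max (p : pred nat) k m : p m -> (m <= k)%N ->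
  (m <= last_index p k)%N /\ p (last_index p k).
Proof.
move=> pm mk; have [] := @find_iota_min (fun d => p (k - d)%N) k.+1 (k - m).
- by rewrite subKn.
- by rewrite ltnS leq_subr.
by rewrite /last_index; split=> //; lia.
Qed.

Arguments last_index_max {p k m}.

Section Approximation.
Variables (R : realType) (Y : pseudoMetricType R).
Variables (c : nat -> Y) (G : nat -> nat -> set baire).

Definition first_hit (N : set (set baire)) k M : nat :=
  find (fun j => `[< N (G M j) >]) (iota 0 k.+1).

Definition coherent N k M : bool :=
  `[< forall a, (a <= M)%N ->
      ball (c (first_hit N k a)) (2 * 2^-1 ^+ a) (c (first_hit N k M)) >].

Definition approx N k : Y := c (first_hit N k (last_index (coherent N k) k)).

Lemma approx_full (A : set baire) k : full_fun R Y A (fun x => approx (meets_cyl k x) k).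
Proof.
split.
  apply: (@sub_finite_set _ _ (c @` `I_k.+2)); last exact: finite_image.
  move=> _ [x Ax <-]; exists (first_hit (meets_cyl k x) k
    (last_index (coherent (meets_cyl k x) k) k)) => //.
  by rewrite /= /first_hit ltnS -[X in (_ <= X)%N](size_iota 0 k.+1) find_size.
move=> v _; exists (2^-1 ^+ k); split; first by rewrite exprn_gt0 ?invr_gt0.
move=> x [Ax /= xv] y Ay /baire_dist_ltP xy; split => //=.
by rewrite -(meets_cyl_agree xy).
Qed.

Variable A : set baire.
Hypothesis G_closed : forall M j, G M j `<=` A /\ rel_closed R A (G M j).

Lemma near_first_hit x M : A x -> (exists j, G M j x) ->
  \forall k \near \oo, G M (first_hit (meets_cyl k x) k M) x.
Proof.
move=> Ax [j1 Gj1]; have exG : exists j, `[< G M j x >] by exists j1; apply/asboolP.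
have [j0 /asboolP Gj0 minj0] := ex_minnP exG.
have notG i : (i < j0)%N -> ~ G M i x.
  by move=> ij0 /asboolP /minj0; rewrite leqNgt ij0.
have far : \forall k \near \oo, forall j : 'I_j0, ~ meets_cyl k x (G M j).
  apply: filter_forall => j; have [SA clS] := G_closed M j.
  exact: near_not_meets_cyl SA clS Ax (notG j (ltn_ord j)).
near=> k.
have fark : forall j : 'I_j0, ~ meets_cyl k x (G M j) by near: k.
have [] := @find_iota_min (fun j => `[< meets_cyl k x (G M j) >]) k.+1 j0.
- exact/asboolP/meets_cyl_mem.
- by rewrite ltnS; near: k; exact: nbhs_infty_ge.
rewrite /first_hit; set J := find _ _ => Jj0 /asboolP meetsJ.
suff -> : J = j0 by [].
apply/eqP; rewrite eqn_leq Jj0 leqNgt; apply/negP => Jlt.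
exact: (fark (Ordinal Jlt) meetsJ).
Unshelve. all: by end_near.
Qed.

Lemma approx_cvg (f : baire -> Y) x : A x -> (forall M, exists j, G M j x) ->
  (forall M j, G M j x -> ball (c j) (2^-1 ^+ M) (f x)) ->
  approx (meets_cyl k x) k @[k --> \oo] --> f x.
Proof.
move=> Ax cover G_ball; apply/cvg_ballP => e e0.
have [M0 M0e] : exists M0, (2^-1 : R) ^+ M0 < e / 3.
  by apply: exists_halfX_lt; rewrite divr_gt0.
have hits : \forall k \near \oo, forall a : 'I_M0.+1,
    G a (first_hit (meets_cyl k x) k a) x.
  by apply: filter_forall => a; exact: near_first_hit.
near=> k.
have hitk : forall a : 'I_M0.+1, G a (first_hit (meets_cyl k x) k a) x by near: k.
set N := meets_cyl k x.
have close a : (a <= M0)%N -> ball (c (first_hit N k a)) (2^-1 ^+ a) (f x).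
  by rewrite -ltnS => aM0; exact: G_ball (hitk (Ordinal aM0)).
have cohM0 : coherent N k M0.
  apply/asboolP => a aM0.
  have qa : (2^-1 : R) ^+ M0 <= 2^-1 ^+ a by rewrite ler_wiXn2l ?invf_le1 ?ler1n.
  by apply: le_ball (ball_triangle (close a aM0) (ball_sym (close M0 (leqnn _)))); lra.
have [|M0_le /asboolP /(_ M0) coh] := last_index_max cohM0 (_ : M0 <= k)%N.
  by near: k; exact: nbhs_infty_ge.
move: (ball_triangle (ball_sym (close M0 (leqnn _))) (coh M0_le)); apply: le_ball.
have q0 : 0 <= (2^-1 : R) ^+ M0 by rewrite exprn_ge0.
lra.
Unshelve. all: by end_near.
Qed.

End Approximation.

Arguments approx {R Y} c G N k.
Arguments approx_cvg {R Y c G A} G_closed {f x}.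

Lemma separable_ball_enum {R : realType} {Y : pseudoMetricType R} (y0 : Y) :
  separable Y ->
  exists e : nat -> Y, forall y r, 0 < r -> exists i, interior (ball (e i) r) y.
Proof.
case=> D [/pfcard_geP[->|[e]] dD].
  by have [y [_ []]] := dD setT (ex_intro _ y0 I) openT.
exists e => y r r0.
have yball : interior (ball y (r / 2)) y by apply: nbhsx_ballx; rewrite divr_gt0.
have [d [/interior_subset yd /('surj_e) [i _ ed]]] :=
  dD _ (ex_intro _ _ yball) (@open_interior _ _).
exists i; rewrite ed; apply/nbhs_ballP; exists (r / 2); first by rewrite /= divr_gt0.
move=> z /(ball_triangle (ball_sym yd)); apply: le_ball; lra.
Qed.

Lemma baire_class1_closed_cover {R : realType} {Y : pseudoMetricType R}
    {A : set baire} {f : baire -> Y} :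
  separable Y -> baire_class1 R Y A f ->
  exists (c : nat -> Y) (G : nat -> nat -> set baire),
    [/\ forall M j, G M j `<=` A /\ rel_closed R A (G M j),
        forall x, A x -> forall M, exists j, G M j x &
        forall x M j, G M j x -> ball (c j) (2^-1 ^+ M) (f x)].
Proof.
move=> sepY f1.
have [e e_dense] := separable_ball_enum (f (fun=> 0%N)) sepY.
pose U i M := interior (ball (e i) (2^-1 ^+ M)).
have /choice[F F_cover] : forall iM : nat * nat, exists F : nat -> set baire,
    (forall n, F n `<=` A /\ rel_closed R A (F n)) /\
    A `&` f @^-1` U iM.1 iM.2 = \bigcup_n F n.
  by case=> i M; exact: f1 (U i M) (@open_interior _ _).
pose unpair j : nat * nat := odflt (0, 0)%N (unpickle j).
exists (fun j => e (unpair j).1), (fun M j => F ((unpair j).1, M) (unpair j).2).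
split=> [M j|x Ax M|x M j].
- exact: (F_cover _).1.
- have [|i fx_i] := e_dense (f x) (2^-1 ^+ M); first by rewrite exprn_gt0 ?invr_gt0.
  have : (A `&` f @^-1` U i M) x by [].
  rewrite (F_cover (i, M)).2 => -[n _ Fn].
  by exists (pickle (i, n)); rewrite /unpair pickleK.
- move=> Fx; have : (A `&` f @^-1` U (unpair j).1 M) x.
    by rewrite (F_cover (_, M)).2; exists (unpair j).2.
  by case=> _ /interior_subset.
Qed.

Theorem mainTheorem14 (R : realType) (Y : pseudoMetricType R)
  (hY : hausdorff_space Y) (sepY : separable Y)
  (A : set baire) (f : baire -> Y) :
  baire_class1 R Y A f ->
  exists fk : nat -> baire -> Y,
    (forall k, full_fun R Y A (fk k)) /\
    (forall x, A x -> fk k x @[k --> \oo] --> f x).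
Proof.
move=> f1; have [c [G [G_closed G_cover G_ball]]] := baire_class1_closed_cover sepY f1.
exists (fun k x => approx c G (meets_cyl k x) k); split=> [k|x Ax].
  exact: approx_full.
exact (approx_cvg G_closed Ax (G_cover x Ax) (G_ball x)).
Qed.
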